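(* Let $\mathcal G$ satisfy the Compactness, Convexity, Continuity and Symmetry assumptions. Then for every constant $M\ge0$, \[ \inf_{W\in\mathbb R^n}\sup_{g\in\mathcal G}J_\lambda(W,g)\le\sup_{g\in\mathcal G}\inf_{\|W\|\le M}B(W,g)^2+\frac{\lambda}{n^2}M^2 . \]
   Context: Setting: finite state space $\mathcal S$, actions $[m]$, confounder space $\mathcal U$; data $Z_i=(S_i,A_i,S_i')$, $i\in[n]$, with unobserved confounders $U_i$; $\pi_e(a\mid s,u)$ an evaluation policy; $d(S)$ the stationary state density ratio; conditional expectations are under the behavior stationary distribution. For $W\in\mathbb R^n$ and $g=(g_1,\dots,g_m)$, $g_a:\mathcal S\times\mathcal U\to\mathbb R$: $f_{ia}=W_i\delta_{A_ia}-d(S_i)\pi_e(a\mid S_i,U_i)$, $B(W,g)=\frac1n\sum_i\sum_a\mathbb E[f_{ia}g_a(S_i,U_i)\mid Z_i]$, $J_\lambda(W,g)=B(W,g)^2+\frac{\lambda}{n^2}\|W\|^2$ with $\lambda\ge0$. $\mathcal G$ is a normed class of such $g$, $\mathcal G^*=\{g/\|g\|:g\in\mathcal G,\|g\|>0\}$, $h_g(z)=\mathbb E[g_A(S,U)\mid Z=z]$, $k_g(z)=\mathbb E[d(S)\sum_a\pi_e(a\mid S,U)g_a(S,U)\mid Z=z]$. Compactness: $\mathcal G$ and $\mathcal G^*$ compact. Convexity: $\mathcal G$ convex. Continuity: $h_g(z)$ and $k_g(z)$ continuous in $g$ for every $z$, and $g_a(s,u)$ continuous in $(s,u)$. Symmetry: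 $g\in\mathcal G\iff-g\in\mathcal G$. *)

From HB Require Import structures.
From mathcomp Require Import all_boot all_order all_algebra.
From mathcomp Require Import all_classical all_reals all_analysis.
Set Implicit Arguments. Unset Strict Implicit. Unset Printing Implicit Defensive.
Import Order.TTheory GRing.Theory Num.Theory.
Import numFieldNormedType.Exports.
Local Open Scope classical_set_scope.
Local Open Scope ring_scope.

Definition Borel (U : ptopologicalType) := g_sigma_algebraType (@open U).

(* Observed transition Z = (S, A, S'). *)
Definition Ztype (St : finType) (m : nat) := (St * 'I_m * St)%type.

Section Defs.
Context (R : realType) (St : finType) (m n : nat) (U : ptopologicalType).

(* Conditional expectation given Z = z: integral against the conditional
   distribution (kernel) kappa z of the confounder U given Z = z. *)
Definition condE (kappa : Ztype St m -> probability (Borel U) R)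
  (z : Ztype St m) (f : U -> R) : R := Rintegral (kappa z) setT f.

Variables (kappa : Ztype St m -> probability (Borel U) R)
  (Z : 'I_n -> Ztype St m) (d : St -> R) (pie : 'I_m -> St -> U -> R).

Definition Sof (z : Ztype St m) : St := z.1.1.
Definition Aof (z : Ztype St m) : 'I_m := z.1.2.

Definition fia (W : 'I_n -> R) (i : 'I_n) (a : 'I_m) (u : U) : R :=
  W i * ((Aof (Z i) == a)%:R) - d (Sof (Z i)) * pie a (Sof (Z i)) u.

Definition Bfun (W : 'I_n -> R) (g : 'I_m -> St -> U -> R) : R :=
  n%:R^-1 * \sum_(i < n) \sum_(a < m)
     condE kappa (Z i) (fun u => fia W i a u * g a (Sof (Z i)) u).

Definition normW (W : 'I_n -> R) : R := Num.sqrt (\sum_(i < n) W i ^+ 2).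

Definition Jfun (lam : R) (W : 'I_n -> R) (g : 'I_m -> St -> U -> R) : R :=
  Bfun W g ^+ 2 + lam / (n%:R ^+ 2) * normW W ^+ 2.

Definition hfun (g : 'I_m -> St -> U -> R) (z : Ztype St m) : R :=
  condE kappa z (fun u => g (Aof z) (Sof z) u).

Definition kfun (g : 'I_m -> St -> U -> R) (z : Ztype St m) : R :=
  condE kappa z (fun u => d (Sof z) * \sum_(a < m) pie a (Sof z) u * g a (Sof z) u).
End Defs.

Definition Gstar (R : realType) (V : normedModType R) (G : set V) : set V :=
  [set (`|v|^-1) *: v | v in [set v | G v /\ 0 < `|v|]].

(* The loss is affine in the weights, B(W, g) = <W, h_g> - k_g, where h_g and
   k_g are the empirical means of h_g(Z_i) and k_g(Z_i); both depend linearly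
   on g, so by convexity and symmetry of G the pairs (h_g, k_g) form a convex
   symmetric set F.  The bound then reduces to a minimax statement on the ball
   |W| <= M: if for each (y, k) in F some W in the ball has |<W, y> - k| <= t,
   then a single W in the ball does so for all (y, k) in F at once.  To find
   it, take the cone generated by the pairs (y, k + t) and the sublinear gauge
   x |-> inf (k' + M |x - y'|) over that cone; a linear minorant <W, .> of the
   gauge, given by finite-dimensional Hahn-Banach, satisfies |W| <= M and
   <W, y> <= k + t on F, and symmetry of F gives the other inequality. *)

From HB Require Import structures.
From mathcomp Require Import all_boot all_order all_algebra.
From mathcomp Require Import all_classical all_reals all_analysis.
From mathcomp Require Import ring lra.
Set Implicit Arguments. Unset Strict Implicit. Unset Printing Implicit Defensive.
Import Order.TTheory GRing.Theory Num.Theory.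
Import numFieldNormedType.Exports.
Local Open Scope classical_set_scope.
Local Open Scope ring_scope.

Section Euclidean.
Variables (R : realType) (n : nat).
Implicit Types x y : 'I_n -> R.

Definition dot x y : R := \sum_i x i * y i.

Lemma dotC x y : dot x y = dot y x.
Proof. by apply: eq_bigr => i _; rewrite mulrC. Qed.

Lemma dotNr x y : dot x (- y) = - dot x y.
Proof. by rewrite /dot -sumrN; apply: eq_bigr => i _; rewrite opprfctE mulrN. Qed.

Lemma normW_ge0 x : 0 <= normW x.
Proof. exact: sqrtr_ge0. Qed.

Lemma normW_sqr x : normW x ^+ 2 = dot x x.
Proof.
rewrite sqr_sqrtr; last by apply: sumr_ge0 => i _; exact: sqr_ge0.
by apply: eq_bigr => i _; rewrite expr2.
Qed.

Lemma normW0 : normW (0 : 'I_n -> R) = 0.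
Proof. by rewrite /normW big1 ?sqrtr0 // => i _; rewrite expr0n. Qed.

Lemma normWZ c x : normW (c *: x) = `|c| * normW x.
Proof.
rewrite /normW (eq_bigr (fun i => c ^+ 2 * x i ^+ 2)); last by move=> i _; rewrite exprMn.
by rewrite -mulr_sumr sqrtrM ?sqr_ge0 // sqrtr_sqr.
Qed.

Lemma normWN x : normW (- x) = normW x.
Proof. by rewrite -scaleN1r normWZ normrN1 mul1r. Qed.

Lemma dot_sqr_le x y : dot x y ^+ 2 <= dot x x * dot y y.
Proof.
have sq_ge0 : 0 <= \sum_i \sum_j (x i * y j - x j * y i) ^+ 2.
  by apply: sumr_ge0 => i _; apply: sumr_ge0 => j _; exact: sqr_ge0.
have prod_xy : \sum_i \sum_j x i ^+ 2 * y j ^+ 2 = dot x x * dot y y.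
  rewrite big_distrl; apply: eq_bigr => i _; rewrite big_distrr.
  by apply: eq_bigr => j _; rewrite !expr2.
have prod_yx : \sum_i \sum_j x j ^+ 2 * y i ^+ 2 = dot x x * dot y y.
  by rewrite exchange_big /= prod_xy.
have sqr_dot : \sum_i \sum_j (x i * y i) * (x j * y j) = dot x y ^+ 2.
  by rewrite expr2 big_distrl; apply: eq_bigr => i _; rewrite big_distrr.
have lagrange : \sum_i \sum_j (x i * y j - x j * y i) ^+ 2 =
    \sum_i \sum_j x i ^+ 2 * y j ^+ 2 + \sum_i \sum_j x j ^+ 2 * y i ^+ 2
    - 2 * \sum_i \sum_j (x i * y i) * (x j * y j).
  rewrite mulr_sumr -big_split -sumrB /=; apply: eq_bigr => i _.
  rewrite mulr_sumr -big_split -sumrB /=; apply: eq_bigr => j _.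
  ring.
rewrite lagrange prod_xy prod_yx sqr_dot in sq_ge0; lra.
Qed.

Lemma dot_le_normW x y : dot x y <= normW x * normW y.
Proof.
apply: le_trans (ler_norm _) _.
rewrite -ler_sqr ?nnegrE ?normr_ge0 ?mulr_ge0 ?normW_ge0 //.
by rewrite real_normK ?num_real // exprMn !normW_sqr dot_sqr_le.
Qed.

Lemma normWD x y : normW (x + y) <= normW x + normW y.
Proof.
have dotD : dot (x + y) (x + y) = dot x x + dot y y + 2 * dot x y.
  rewrite /dot mulr_sumr -!big_split /=; apply: eq_bigr => i _.
  by rewrite addrfctE; ring.
rewrite -ler_sqr ?nnegrE ?addr_ge0 ?normW_ge0 //.
rewrite sqrrD !normW_sqr dotD.
have := dot_le_normW x y; lra.
Qed.

End Euclidean.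

Section InfImage.
Variables (R : realType) (T : Type) (A : set T) (f : T -> R).

Lemma ge_inf_image b t : (forall t, A t -> b <= f t) -> A t -> inf (f @` A) <= f t.
Proof.
move=> lbf At; apply: ge_inf; last by exists t.
by exists b => _ [u Au <-]; exact: lbf.
Qed.

Lemma le_inf_image a t : A t -> (forall t, A t -> a <= f t) -> a <= inf (f @` A).
Proof.
move=> At lbf; apply: lb_le_inf; first by exists (f t), t.
by move=> _ [u Au <-]; exact: lbf.
Qed.

End InfImage.

Section HahnBanach.
Variables (R : realType) (V : lmodType R).

Record sublinear (s : V -> R) : Prop := Sublinear {
  sublinearD : forall x y, s (x + y) <= s x + s y;
  sublinearZ : forall c x, 0 < c -> s (c *: x) = c * s x }.

Definition affine_along (t : V -> R) (e : V) (a : R) :=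
  forall x c, t (x + c *: e) = t x + c * a.

(* The largest minorant of [s] that is affine along [e] with slope [s e]: one
   step of the Hahn-Banach extension.  For sublinear [s] the infimum is bounded
   below by [- s (- x)], so it is never the junk value of [inf]. *)
Definition hb_reduce (s : V -> R) (e x : V) : R :=
  inf [set s (x + c *: e) - c * s e | c in [set: R]].

Section Sublinear.
Variable s : V -> R.
Hypothesis s_sublin : sublinear s.

Lemma sublinear0 : s 0 = 0.
Proof. by have := sublinearZ s_sublin 0 (ltr0Sn R 1); rewrite scaler0 => ?; lra. Qed.

Lemma sublinear_scale_ge c e : c * s e <= s (c *: e).
Proof.
have [c_lt0|c_gt0|->] := ltgtP c 0.
- have s_opp : 0 <= s e + s (- e).
    by rewrite -sublinear0 -(subrr e); exact: sublinearD.
  have -> : c *: e = (- c) *: (- e) by rewrite scaleNr scalerN opprK.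
  rewrite sublinearZ ?oppr_gt0 //; nra.
- by rewrite sublinearZ.
- by rewrite scale0r sublinear0 mul0r.
Qed.

Lemma sublinear_shift_ge x e c : - s (- x) <= s (x + c *: e) - c * s e.
Proof.
have := sublinearD s_sublin (x + c *: e) (- x).
rewrite addrAC subrr add0r.
have := sublinear_scale_ge c e; lra.
Qed.

Lemma hb_reduce_le e x c : hb_reduce s e x <= s (x + c *: e) - c * s e.
Proof. by apply: (ge_inf_image (b := - s (- x))) => // c' _; exact: sublinear_shift_ge. Qed.

Lemma le_hb_reduce e x b :
  (forall c, b <= s (x + c *: e) - c * s e) -> b <= hb_reduce s e x.
Proof. by move=> lb; apply: (le_inf_image (t := 0)) => // c _; exact: lb. Qed.

Lemma hb_reduce_le_self e x : hb_reduce s e x <= s x.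
Proof. by have := hb_reduce_le e x 0; rewrite scale0r addr0 mul0r subr0. Qed.

Lemma hb_reduce_affine e : affine_along (hb_reduce s e) e (s e).
Proof.
have shift x c c' : x + c *: e + c' *: e = x + (c + c') *: e.
  by rewrite -addrA -scalerDl.
move=> x c; apply/eqP; rewrite eq_le; apply/andP; split.
- rewrite -lerBlDr; apply: le_hb_reduce => c'.
  have := hb_reduce_le e (x + c *: e) (c' - c).
  rewrite shift addrCA subrr addr0; lra.
- apply: le_hb_reduce => c'; rewrite shift.
  have := hb_reduce_le e x (c + c'); lra.
Qed.

Lemma hb_reduce_sublinear e : sublinear (hb_reduce s e).
Proof.
split=> [x y|mu x mu_gt0].
- have split_sum c1 c2 : hb_reduce s e (x + y) <=
      (s (x + c1 *: e) - c1 * s e) + (s (y + c2 *: e) - c2 * s e).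
    apply: le_trans (hb_reduce_le e (x + y) (c1 + c2)) _.
    have := sublinearD s_sublin (x + c1 *: e) (y + c2 *: e).
    rewrite addrACA -scalerDl; lra.
  suff : hb_reduce s e (x + y) - hb_reduce s e y <= hb_reduce s e x by lra.
  apply: le_hb_reduce => c1.
  suff : hb_reduce s e (x + y) - (s (x + c1 *: e) - c1 * s e) <= hb_reduce s e y.
    by lra.
  by apply: le_hb_reduce => c2; have := split_sum c1 c2; lra.
- have scale c : mu *: x + (mu * c) *: e = mu *: (x + c *: e).
    by rewrite scalerDr scalerA.
  apply/eqP; rewrite eq_le; apply/andP; split.
  + rewrite -ler_pdivrMl //; apply: le_hb_reduce => c; rewrite ler_pdivrMl //.
    apply: le_trans (hb_reduce_le e (mu *: x) (mu * c)) _.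
    by rewrite scale sublinearZ //; lra.
  + apply: le_hb_reduce => c.
    have mu_c : mu * (c / mu) = c by rewrite mulrCA divff ?gt_eqF ?mulr1.
    have := ler_wpM2l (ltW mu_gt0) (hb_reduce_le e x (c / mu)).
    rewrite mulrBr mulrA mu_c => le_mu.
    by rewrite -{1}mu_c scale sublinearZ.
Qed.

Lemma affine_along_hb_reduce e f a :
  affine_along s f a -> affine_along (hb_reduce s e) f a.
Proof.
move=> s_aff x c; apply/eqP; rewrite eq_le; apply/andP; split.
- rewrite -lerBlDr; apply: le_hb_reduce => c'.
  have := hb_reduce_le e (x + c *: f) c'.
  by rewrite addrAC s_aff; lra.
- apply: le_hb_reduce => c'.
  have := hb_reduce_le e x c'.
  by rewrite addrAC s_aff; lra.
Qed.

End Sublinear.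

(* Reduce [s] along each [e i] in turn; the result is affine along every [e i]. *)
Lemma sublinear_dominates_linear (I : finType) (s : V -> R) (e : I -> V) :
  sublinear s -> exists a : I -> R, forall c : I -> R,
    \sum_i c i * a i <= s (\sum_i c i *: e i).
Proof.
move=> s_sublin.
have [t [a [t_sublin t_le_s t_aff]]] : exists t a, [/\ sublinear t,
    forall x, t x <= s x & forall i, i \in enum I -> affine_along t (e i) (a i)].
  elim: (enum I) => [|j r [t [a [t_sublin t_le_s t_aff]]]].
    by exists s, (fun _ => 0); split.
  exists (hb_reduce t (e j)), (fun i => if i == j then t (e j) else a i); split.
  - exact: hb_reduce_sublinear.
  - by move=> x; apply: le_trans (t_le_s x); exact: hb_reduce_le_self.
  - move=> i; rewrite in_cons; case: eqP => [-> _|_ /= ir].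
      exact: hb_reduce_affine.
    exact: affine_along_hb_reduce (t_aff i ir).
exists a => c.
have t_sum r : t (\sum_(i <- r) c i *: e i) = \sum_(i <- r) c i * a i.
  elim: r => [|i r IH]; first by rewrite !big_nil sublinear0.
  by rewrite !big_cons addrC t_aff ?mem_enum // IH addrC.
by rewrite -t_sum; exact: t_le_s.
Qed.

End HahnBanach.

Lemma sublinear_dominates_dot (R : realType) (n : nat) (s : ('I_n -> R) -> R) :
  sublinear s -> exists W, forall x, dot W x <= s x.
Proof.
move=> /(sublinear_dominates_linear (fun i j : 'I_n => (i == j)%:R)) [W le_s].
exists W => x; rewrite dotC.
have x_sum : \sum_i x i *: (fun j : 'I_n => (i == j)%:R) = x.
  apply/funext => j; rewrite fct_sumE (eq_bigr (fun i => x i * (i == j)%:R)) //.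
  rewrite (bigD1 j) //= eqxx mulr1 big1 ?addr0 //.
  by move=> i /negPf ->; rewrite mulr0.
by have := le_s x; rewrite x_sum.
Qed.

Section ConeSeparation.
Variables (R : realType) (n : nat) (M : R) (K : set (('I_n -> R) * R)).
Hypotheses (M_ge0 : 0 <= M) (K0 : K 0)
  (KD : forall p q, K p -> K q -> K (p + q))
  (KZ : forall c p, 0 < c -> K p -> K (c *: p))
  (K_ge : forall p, K p -> - (M * normW p.1) <= p.2).
Implicit Types (x : 'I_n -> R) (p q : ('I_n -> R) * R).

Definition cone_gauge (x : 'I_n -> R) : R :=
  inf [set p.2 + M * normW (x - p.1) | p in K].

Lemma cone_gauge_le x p : K p -> cone_gauge x <= p.2 + M * normW (x - p.1).
Proof.
apply: (ge_inf_image (b := - (M * normW x))) => q Kq.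
have tri : normW q.1 <= normW x + normW (x - q.1).
  by have := normWD x (- (x - q.1)); rewrite normWN opprB addrC subrK.
have := ler_wpM2l M_ge0 tri; have := K_ge Kq; lra.
Qed.

Lemma le_cone_gauge x b :
  (forall p, K p -> b <= p.2 + M * normW (x - p.1)) -> b <= cone_gauge x.
Proof. exact: le_inf_image K0. Qed.

Lemma cone_gaugeZ c x p : 0 < c ->
  (c *: p).2 + M * normW (c *: x - (c *: p).1) = c * (p.2 + M * normW (x - p.1)).
Proof.
move=> c_gt0; rewrite /= -scalerBr normWZ gtr0_norm //.
by rewrite (_ : c *: p.2 = c * p.2) //; ring.
Qed.

Lemma cone_gauge_sublinear : sublinear cone_gauge.
Proof.
split=> [x y|c x c_gt0].
- have split_sum p q : K p -> K q -> cone_gauge (x + y) <=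
      (p.2 + M * normW (x - p.1)) + (q.2 + M * normW (y - q.1)).
    move=> Kp Kq; apply: le_trans (cone_gauge_le (x + y) (KD Kp Kq)) _.
    rewrite /= opprD addrACA.
    have := ler_wpM2l M_ge0 (normWD (x - p.1) (y - q.1)); lra.
  suff : cone_gauge (x + y) - cone_gauge y <= cone_gauge x by lra.
  apply: le_cone_gauge => p Kp.
  suff : cone_gauge (x + y) - (p.2 + M * normW (x - p.1)) <= cone_gauge y by lra.
  by apply: le_cone_gauge => q Kq; have := split_sum p q Kp Kq; lra.
- apply/eqP; rewrite eq_le; apply/andP; split.
  + rewrite -ler_pdivrMl //; apply: le_cone_gauge => p Kp; rewrite ler_pdivrMl //.
    by rewrite -cone_gaugeZ //; exact/cone_gauge_le/KZ.
  + apply: le_cone_gauge => p Kp.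
    have -> : p = c *: (c^-1 *: p) by rewrite scalerA divff ?gt_eqF ?scale1r.
    rewrite cone_gaugeZ // ler_pM2l //.
    by apply/cone_gauge_le/KZ; rewrite ?invr_gt0.
Qed.

Lemma cone_separation : exists W, normW W <= M /\ forall p, K p -> dot W p.1 <= p.2.
Proof.
have [W le_gauge] := sublinear_dominates_dot cone_gauge_sublinear.
exists W; split => [|p Kp].
- have := le_trans (le_gauge W) (cone_gauge_le W K0).
  rewrite /= subr0 add0r -normW_sqr expr2 => le_M.
  have [W_gt0|W_le0] := ltP 0 (normW W); first by rewrite -(ler_pM2r W_gt0).
  exact: le_trans W_le0 M_ge0.
- have := le_trans (le_gauge p.1) (cone_gauge_le p.1 Kp).
  by rewrite subrr normW0 mulr0 addr0.
Qed.

End ConeSeparation.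

Section BallMinimax.
Variables (R : realType) (n : nat) (M t : R) (F : set (('I_n -> R) * R)).
Hypotheses (M_ge0 : 0 <= M)
  (F_convex : forall f g p, F f -> F g -> 0 <= p <= 1 -> F (p *: f + (1 - p) *: g))
  (F_sym : forall f, F f -> F (- f))
  (F_ball : forall f, F f -> exists2 W, normW W <= M & `|dot W f.1 - f.2| <= t).

Let K := [set q | exists2 l, 0 <= l & exists2 f, F f & q = l *: (f + (0, t))].

Let K_add p q : K p -> K q -> K (p + q).
Proof.
move=> [l1 l1_ge0 [f1 Ff1 ->]] [l2 l2_ge0 [f2 Ff2 ->]].
have [l_eq0|l_neq0] := eqVneq (l1 + l2) 0.
  have [-> ->] : l1 = 0 /\ l2 = 0 by split; lra.
  by exists 0 => //; exists f1 => //; rewrite !scale0r addr0.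
have l_gt0 : 0 < l1 + l2 by rewrite lt_def l_neq0 addr_ge0.
set r := l1 / (l1 + l2).
have r_01 : 0 <= r <= 1.
  by rewrite divr_ge0 ?(ltW l_gt0) //= ler_pdivrMr // mul1r lerDl.
exists (l1 + l2); first exact: ltW.
exists (r *: f1 + (1 - r) *: f2); first exact: F_convex.
have r_l1 : (l1 + l2) * r = l1 by rewrite mulrCA divff ?mulr1.
have r_l2 : (l1 + l2) * (1 - r) = l2 by rewrite mulrBr mulr1 r_l1 addrC addKr.
by rewrite !scalerDr !scalerA r_l1 r_l2 scalerDl addrACA.
Qed.

Lemma ball_minimax : exists W, normW W <= M /\ forall f, F f -> `|dot W f.1 - f.2| <= t.
Proof.
have [[f0 Ff0]|F0] := pselect (exists f, F f); last first.
  exists 0; split=> [|f Ff]; first by rewrite normW0.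
  by case: F0; exists f.
have K0 : K 0 by exists 0 => //; exists f0 => //; rewrite scale0r.
have K_scale c q : 0 < c -> K q -> K (c *: q).
  move=> c_gt0 [l l_ge0 [f Ff ->]]; exists (c * l).
    exact: mulr_ge0 (ltW c_gt0) l_ge0.
  by exists f => //; rewrite scalerA.
have K_ge q : K q -> - (M * normW q.1) <= q.2.
  move=> [l l_ge0 [f Ff ->]] /=; rewrite addr0 normWZ ger0_norm //.
  have [W W_le fit] := F_ball Ff.
  have dot_ge : - (M * normW f.1) <= dot W f.1.
    have := dot_le_normW W (- f.1); rewrite dotNr normWN.
    have := ler_wpM2r (normW_ge0 f.1) W_le; lra.
  have dot_le : dot W f.1 <= f.2 + t.
    by move: fit; rewrite ler_norml => /andP [_]; lra.
  have := ler_wpM2l l_ge0 (le_trans dot_ge dot_le).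
  rewrite (_ : l *: (f.2 + t) = l * (f.2 + t)) //; lra.
have [W [W_le W_sep]] := cone_separation M_ge0 K0 K_add K_scale K_ge.
exists W; split => // f Ff.
have sep g : F g -> dot W g.1 <= g.2 + t.
  move=> Fg; have Kg : K (1 *: (g + (0, t))) by exists 1 => //; exists g.
  by have := W_sep _ Kg; rewrite /= !scale1r addr0.
have := sep _ (F_sym Ff); rewrite /= dotNr.
by have := sep f Ff; rewrite ler_norml; lra.
Qed.

End BallMinimax.

Section RealIntegrals.
Variables (R : realType) (U : ptopologicalType) (mu : probability (Borel U) R).

Definition Rintegrable (f : U -> R) := mu.-integrable [set: Borel U] (EFin \o f).

Lemma RintegrableZ c f : Rintegrable f -> Rintegrable (fun u => c * f u).
Proof.
move=> f_int; rewrite /Rintegrable (_ : EFin \o _ = (fun u => c%:E * (EFin \o f) u)%E).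
  exact: integrableZl.
by apply/funext => u; rewrite /= EFinM.
Qed.

Lemma RintegrableD f g : Rintegrable f -> Rintegrable g -> Rintegrable (fun u => f u + g u).
Proof.
move=> f_int g_int; rewrite /Rintegrable (_ : EFin \o _ = ((EFin \o f) \+ (EFin \o g))%E).
  exact: integrableD.
by apply/funext => u; rewrite /= EFinD.
Qed.

Lemma Rintegrable_bounded_mul (h f : U -> R) : measurable_fun [set: Borel U] h ->
  (forall u, `|h u| <= 1) -> Rintegrable f -> Rintegrable (fun u => h u * f u).
Proof.
move=> h_meas h_le1 f_int.
rewrite /Rintegrable (_ : EFin \o _ = ((EFin \o h) \* (EFin \o f))%E).
  apply: integrableMr => //; exists 1; split; first exact: num_real.
  by move=> x x_gt1 u _; apply: le_trans (ltW x_gt1).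
by apply/funext => u; rewrite /= EFinM.
Qed.

Lemma Rintegral_comb c1 c2 f1 f2 : Rintegrable f1 -> Rintegrable f2 ->
  Rintegral mu setT (fun u => c1 * f1 u + c2 * f2 u) =
  c1 * Rintegral mu setT f1 + c2 * Rintegral mu setT f2.
Proof. by move=> f1_int f2_int; rewrite RintegralD ?RintegralZl //; exact: RintegrableZ. Qed.

Lemma Rintegrable_sum (I : Type) (r : seq I) (f : I -> U -> R) :
  (forall i, Rintegrable (f i)) -> Rintegrable (fun u => \sum_(i <- r) f i u).
Proof.
move=> f_int; elim: r => [|i r IH].
  rewrite /Rintegrable (_ : EFin \o _ = cst 0%E); first exact: integrable0.
  by apply/funext => u; rewrite /= big_nil.
under eq_fun do rewrite big_cons.
exact: RintegrableD.
Qed.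

Lemma Rintegral_sum (I : Type) (r : seq I) (f : I -> U -> R) :
  (forall i, Rintegrable (f i)) ->
  Rintegral mu setT (fun u => \sum_(i <- r) f i u) = \sum_(i <- r) Rintegral mu setT (f i).
Proof.
move=> f_int; elim: r => [|i r IH].
  by under eq_fun do rewrite big_nil; rewrite Rintegral_cst // mul0r big_nil.
under eq_fun do rewrite big_cons.
by rewrite RintegralD ?big_cons ?IH //; [exact: f_int | exact: Rintegrable_sum].
Qed.

End RealIntegrals.

Section Estimator.
Variables (R : realType) (St : finType) (m n : nat) (U : ptopologicalType)
  (kappa : Ztype St m -> probability (Borel U) R)
  (Z : 'I_n -> Ztype St m) (d : St -> R) (pie : 'I_m -> St -> U -> R).
Hypotheses (pie_ge0 : forall a s u, 0 <= pie a s u)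
  (pie_sum1 : forall s u, \sum_(a < m) pie a s u = 1)
  (pie_meas : forall a s, measurable_fun [set: Borel U] (pie a s)).

Definition cond_integrable (g : 'I_m -> St -> U -> R) :=
  forall a s z, Rintegrable (kappa z) (g a s).

Lemma pie_le1 a s u : `|pie a s u| <= 1.
Proof.
rewrite ger0_norm // -(pie_sum1 s u) (bigD1 a) //= lerDl.
by apply: sumr_ge0 => b _.
Qed.

Section Integrable.
Variable g : 'I_m -> St -> U -> R.
Hypothesis g_int : cond_integrable g.

Lemma pie_mul_integrable a s z : Rintegrable (kappa z) (fun u => pie a s u * g a s u).
Proof. exact: Rintegrable_bounded_mul (pie_le1 a s) (g_int a s z). Qed.

Lemma kfun_integrand_integrable s z :
  Rintegrable (kappa z) (fun u => d s * \sum_(a < m) pie a s u * g a s u).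
Proof. by apply/RintegrableZ/Rintegrable_sum => a; exact: pie_mul_integrable. Qed.

Lemma kfun_sum z : kfun kappa d pie g z =
  d (Sof z) * \sum_(a < m) condE kappa z (fun u => pie a (Sof z) u * g a (Sof z) u).
Proof.
rewrite /kfun /condE RintegralZl ?Rintegral_sum //; first by move=> a; exact: pie_mul_integrable.
by apply: Rintegrable_sum => a; exact: pie_mul_integrable.
Qed.

Lemma Bfun_hk W : Bfun kappa Z d pie W g =
  n%:R^-1 * \sum_i (W i * hfun kappa g (Z i) - kfun kappa d pie g (Z i)).
Proof.
rewrite /Bfun; congr (_ * _); apply: eq_bigr => i _.
rewrite kfun_sum /hfun /condE.
set s := Sof (Z i); set A := Aof (Z i).
have fia_split a : Rintegral (kappa (Z i)) setT (fun u => fia Z d pie W i a u * g a s u) =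
    (W i * (A == a)%:R) * Rintegral (kappa (Z i)) setT (g a s) +
    (- d s) * Rintegral (kappa (Z i)) setT (fun u => pie a s u * g a s u).
  rewrite -Rintegral_comb //; last exact: pie_mul_integrable.
  by congr Rintegral; apply/funext => u; rewrite /fia; ring.
rewrite (eq_bigr _ (fun a _ => fia_split a)) big_split /= -mulr_sumr mulNr.
rewrite (bigD1 A) //= eqxx mulr1 big1 ?addr0 // => a /negPf.
by rewrite eq_sym => ->; rewrite mulr0 mul0r.
Qed.

End Integrable.

Lemma hfun_comb g g' c c' z : cond_integrable g -> cond_integrable g' ->
  hfun kappa (fun a s u => c * g a s u + c' * g' a s u) z =
  c * hfun kappa g z + c' * hfun kappa g' z.
Proof. by move=> g_int g'_int; exact: Rintegral_comb. Qed.

Lemma kfun_comb g g' c c' z : cond_integrable g -> cond_integrable g' ->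
  kfun kappa d pie (fun a s u => c * g a s u + c' * g' a s u) z =
  c * kfun kappa d pie g z + c' * kfun kappa d pie g' z.
Proof.
move=> g_int g'_int; rewrite /kfun /condE -Rintegral_comb; try exact: kfun_integrand_integrable.
congr Rintegral; apply/funext => u; rewrite !mulr_sumr -big_split /=.
by apply: eq_bigr => a _; ring.
Qed.

Variables (V : normedModType R) (ev : V -> 'I_m -> St -> U -> R) (G : set V) (M : R).
Hypotheses (ev_lin : forall (c : R) (v w : V) a s u,
              ev (c *: v + w) a s u = c * ev v a s u + ev w a s u)
  (G_int : forall v, G v -> cond_integrable (ev v))
  (convexG : convex_set (G : set (convex_lmodType V)))
  (symG : forall v, G v <-> G (- v)) (M_ge0 : 0 <= M).

Definition hvec (v : V) : 'I_n -> R := fun i => n%:R^-1 * hfun kappa (ev v) (Z i).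

Definition kmean (v : V) : R := n%:R^-1 * \sum_i kfun kappa d pie (ev v) (Z i).

Lemma Bfun_dot W v : G v -> Bfun kappa Z d pie W (ev v) = dot W (hvec v) - kmean v.
Proof.
move=> Gv; rewrite (Bfun_hk (G_int Gv)) sumrB mulrBr mulr_sumr.
by congr (_ - _); apply: eq_bigr => i _; rewrite mulrCA.
Qed.

Lemma ev_comb c c' v w :
  ev (c *: v + c' *: w) = fun a s u => c * ev v a s u + c' * ev w a s u.
Proof.
have ev0 a s u : ev 0 a s u = 0.
  by have := ev_lin 1 0 0 a s u; rewrite scale1r addr0 mul1r; lra.
apply/funext => a; apply/funext => s; apply/funext => u.
by rewrite ev_lin -[c' *: w]addr0 ev_lin ev0 addr0.
Qed.

Lemma hvec_kmean_comb c c' v w : G v -> G w ->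
  (hvec (c *: v + c' *: w), kmean (c *: v + c' *: w)) =
  c *: (hvec v, kmean v) + c' *: (hvec w, kmean w).
Proof.
move=> Gv Gw; rewrite /hvec /kmean ev_comb; apply: f_equal2.
  apply/funext => i; transitivity (c * hvec v i + c' * hvec w i); last by [].
  by rewrite (hfun_comb _ _ _ (G_int Gv) (G_int Gw)) mulrDr (mulrCA _ c) (mulrCA _ c').
transitivity (c * kmean v + c' * kmean w); last by [].
rewrite (eq_bigr _ (fun i _ => kfun_comb _ _ _ (G_int Gv) (G_int Gw))).
by rewrite big_split -!mulr_sumr mulrDr (mulrCA _ c) (mulrCA _ c').
Qed.

Lemma uniform_Bfun_bound t :
  (forall v, G v -> exists2 W, normW W <= M & `|Bfun kappa Z d pie W (ev v)| <= t) ->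
  exists W, normW W <= M /\ forall v, G v -> `|Bfun kappa Z d pie W (ev v)| <= t.
Proof.
move=> pointwise; set F := [set (hvec v, kmean v) | v in G].
have F_convex f g p : F f -> F g -> 0 <= p <= 1 -> F (p *: f + (1 - p) *: g).
  move=> [v Gv <-] [w Gw <-] /andP [p_ge0 p_le1].
  exists (p *: v + (1 - p) *: w); last exact: hvec_kmean_comb.
  have := @convexG v w (Itv01 p_ge0 p_le1) (mem_set Gv) (mem_set Gw).
  by rewrite inE.
have F_sym f : F f -> F (- f).
  move=> [v Gv <-]; exists (- v); first exact: (symG v).1.
  have := hvec_kmean_comb (-1) 0 Gv Gv.
  by rewrite !scale0r !addr0 !scaleN1r.
have F_ball f : F f -> exists2 W, normW W <= M & `|dot W f.1 - f.2| <= t.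
  move=> [v Gv <-]; have [W W_le fit] := pointwise v Gv.
  by exists W; rewrite // -Bfun_dot.
have [W [W_le W_fit]] := ball_minimax M_ge0 F_convex F_sym F_ball.
exists W; split=> // v Gv; rewrite Bfun_dot //.
by apply: (W_fit (hvec v, kmean v)); exists v.
Qed.

End Estimator.

Lemma Jfun_le (R : realType) (St : finType) (m n : nat) (U : ptopologicalType)
    (kappa : Ztype St m -> probability (Borel U) R) (Z : 'I_n -> Ztype St m)
    (d : St -> R) (pie : 'I_m -> St -> U -> R) lam M W g r :
  0 <= lam -> normW W <= M -> Bfun kappa Z d pie W g ^+ 2 <= r ->
  Jfun kappa Z d pie lam W g <= r + lam / n%:R ^+ 2 * M ^+ 2.
Proof.
move=> lam_ge0 W_le B_le; rewrite /Jfun lerD // ler_wpM2l ?divr_ge0 ?exprn_ge0 //.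
by rewrite ler_sqr ?nnegrE ?normW_ge0 // (le_trans (normW_ge0 W)).
Qed.

Lemma lee_add_fin_of_lt (R : realType) (x y : \bar R) (c : R) :
  (forall r : R, (y < r%:E)%E -> (x <= (r + c)%:E)%E) -> (x <= y + c%:E)%E.
Proof.
case: y => [y| |] x_le.
- apply/lee_addgt0Pr => e e_gt0; rewrite -!EFinD addrAC.
  by apply: x_le; rewrite lte_fin ltrDl.
- by rewrite addye ?leey.
- rewrite (@eq_ninfty _ x) ?leNye // => r.
  by have := x_le (r - c) (ltNyr _); rewrite subrK.
Qed.
Theorem lemma4 (R : realType) (St : finType) (m n : nat) (U : ptopologicalType)
  (kappa : Ztype St m -> probability (Borel U) R)
  (Z : 'I_n -> Ztype St m) (d : St -> R) (pie : 'I_m -> St -> U -> R)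
  (V : normedModType R) (ev : V -> 'I_m -> St -> U -> R) (G : set V)
  (lam M : R)
  (* the normed class G consists of functions g = (g_1,...,g_m), with the
     vector operations of V being the pointwise ones *)
  (ev_inj : injective ev)
  (ev_lin : forall (c : R) (v w : V) a s u,
              ev (c *: v + w) a s u = c * ev v a s u + ev w a s u)
  (* standing assumptions: d a density ratio, pie a policy *)
  (d_ge0 : forall s, 0 <= d s)
  (pie_ge0 : forall a s u, 0 <= pie a s u)
  (pie_sum1 : forall s u, \sum_(a < m) pie a s u = 1)
  (pie_meas : forall a s, measurable_fun [set: Borel U] (pie a s))
  (* conditional expectations of g are well defined *)
  (G_int : forall v, G v -> forall a s z,
              (kappa z).-integrable [set: Borel U] (fun u => (ev v a s u)%:E))
  (* Compactness *)
  (compactG : compact G) (compactGstar : compact (Gstar G))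
  (* Convexity *)
  (convexG : convex_set (G : set (convex_lmodType V)))
  (* Continuity *)
  (cont_h : forall z, {within G, continuous (fun v => hfun kappa (ev v) z)})
  (cont_k : forall z, {within G, continuous (fun v => kfun kappa d pie (ev v) z)})
  (cont_g : forall v, G v -> forall a s, continuous (ev v a s))
  (* Symmetry *)
  (symG : forall v, G v <-> G (- v))
  (lam_ge0 : 0 <= lam) (M_ge0 : 0 <= M) :
  (ereal_inf [set ereal_sup [set (Jfun kappa Z d pie lam W (ev v))%:E | v in G]
             | W in [set: 'I_n -> R]]
   <= ereal_sup [set ereal_inf [set ((Bfun kappa Z d pie W (ev v)) ^+ 2)%R%:E
                                | W in [set W : 'I_n -> R | (normW W <= M)%R]]
                | v in G]
      + (lam / (n%:R ^+ 2) * M ^+ 2)%R%:E)%E.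
Proof.
apply: lee_add_fin_of_lt => r S_lt_r.
have pointwise v : G v -> 0 <= r /\
    exists2 W, normW W <= M & `|Bfun kappa Z d pie W (ev v)| <= Num.sqrt r.
  move=> Gv; have /ereal_inf_lt [_ [W W_le <-]] :
      (ereal_inf [set (Bfun kappa Z d pie W (ev v) ^+ 2)%:E
                 | W in [set W | (normW W <= M)%R]] < r%:E)%E.
    by apply: le_lt_trans S_lt_r; apply: ereal_sup_ubound; exists v.
  rewrite lte_fin => B_lt; have r_gt0 := le_lt_trans (sqr_ge0 _) B_lt.
  by split; [exact: ltW | exists W; rewrite // -sqrtr_sqr ler_sqrt ?ltW].
have [W [W_le W_fit]] := uniform_Bfun_bound pie_ge0 pie_sum1 pie_meas ev_lin G_int
  convexG symG M_ge0 (fun v Gv => (pointwise v Gv).2).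
apply: ge_ereal_inf; exists (ereal_sup [set (Jfun kappa Z d pie lam W (ev v))%:E | v in G]).
  by exists W.
apply: ge_ereal_sup => _ [v Gv <-]; rewrite lee_fin; apply: Jfun_le => //.
have [r_ge0 _] := pointwise v Gv.
by rewrite -ler_sqrt // sqrtr_sqr; exact: W_fit.
Qed.
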